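(* Let $a\in\mathbb{R}$, $\lambda\in[0,1)$, and let $f=h+\overline{g}$, where $h,g$ are analytic in $\mathbb{D}$ with $h(0)=g(0)=0$, $h-g=k_a$ and $g'/h'=\lambda z$ in $\mathbb{D}$. Then for $z\in\mathbb{D}$, $$S_f(z)=\frac{2(1-a^2)}{(1-z^2)^2}+\frac{\lambda^2}{2(1-\lambda z)^2}-\frac{2\lambda(z+a)}{(1-z^2)(1-\lambda z)}+\frac{\lambda^2\bar z\,[-3\lambda z^2+2(1-a\lambda)z+2a+\lambda]}{(1-\lambda^2|z|^2)(1-z^2)(1-\lambda z)}-\frac{3\lambda^4\bar z^2}{2(1-\lambda^2|z|^2)^2},$$ and $$\|S_f\|\le \lambda^4+2\lambda^3(|a|+1)+\lambda^2\left(4|a|+\tfrac{13}{2}\right)+2\lambda(|a|+2)+2|1-a^2|.$$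
   Context: $\mathbb{D}$ is the open unit disk. For $a\neq0$, $k_a(z)=\frac{1}{2a}\left[\left(\frac{1+z}{1-z}\right)^a-1\right]$ (principal branch), and $k_0(z)=\frac12\log\frac{1+z}{1-z}$. For a locally univalent harmonic mapping $f=h+\overline g$ with dilatation $\omega=g'/h'$, the Schwarzian derivative is $$S_f=\frac{h'''}{h'}-\frac32\left(\frac{h''}{h'}\right)^2+\frac{\overline{\omega}}{1-|\omega|^2}\left(\frac{h''}{h'}\omega'-\omega''\right)-\frac32\left(\frac{\omega'\overline{\omega}}{1-|\omega|^2}\right)^2,$$ and the Schwarzian norm is $\|S_f\|=\sup_{z\in\mathbb{D}}|S_f(z)|(1-|z|^2)^2$. *)

From Stdlib Require Import Reals ClassicalEpsilon.
From Coquelicot Require Import Coquelicot.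
Open Scope R_scope.

Definition inD (z : C) : Prop := Cmod z < 1.

(* Complex derivative (total operator, chosen classically; it is the unique
   l with is_derive f z l when f is complex differentiable at z). *)
Definition Cder (f : C -> C) (z : C) : C :=
  epsilon (inhabits (RtoC 0)) (fun l : C => is_derive (K := C_AbsRing) (V := C_NormedModule) f z l).

(* Principal argument in (-PI, PI] (0 at w = 0). *)
Definition Carg (w : C) : R :=
  let x := fst w in let y := snd w in
  if Rlt_dec 0 x then atan (y / x)
  else if Rlt_dec x 0 then
         (if Rle_dec 0 y then atan (y / x) + PI else atan (y / x) - PI)
  else if Rlt_dec 0 y then PI / 2
  else if Rlt_dec y 0 then - (PI / 2) else 0.

Definition Clog (w : C) : C := (ln (Cmod w), Carg w).

(* Principal branch of w^a for real a: exp(a Log w), with 0^a := 0. *)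
Definition Cpow_real (w : C) (a : R) : C :=
  if Req_EM_T (Cmod w) 0 then RtoC 0
  else (Rpower (Cmod w) a * cos (a * Carg w), Rpower (Cmod w) a * sin (a * Carg w)).

Definition k_fun (a : R) (z : C) : C :=
  if Req_EM_T a 0 then Cmult (RtoC (1/2)) (Clog (Cdiv (Cplus 1 z) (Cminus 1 z)))
  else Cmult (Cinv (RtoC (2 * a)))
             (Cminus (Cpow_real (Cdiv (Cplus 1 z) (Cminus 1 z)) a) 1).

Definition harm_schwarzian (h g : C -> C) (z : C) : C :=
  let h1 := Cder h in
  let h2 := Cder h1 in
  let h3 := Cder h2 in
  let om := fun u => Cdiv (Cder g u) (h1 u) in
  let om1 := Cder om in
  let om2 := Cder om1 in
  let P := Cdiv (h2 z) (h1 z) in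
  let w := om z in
  let den := Cminus 1 (RtoC (Cmod w ^ 2)) in
  Cminus
    (Cplus
      (Cminus (Cdiv (h3 z) (h1 z)) (Cmult (RtoC (3/2)) (Cmult P P)))
      (Cmult (Cdiv (Cconj w) den) (Cminus (Cmult P (om1 z)) (om2 z))))
    (Cmult (RtoC (3/2))
       (Cmult (Cdiv (Cmult (om1 z) (Cconj w)) den) (Cdiv (Cmult (om1 z) (Cconj w)) den))).

Definition schwarzian_norm (h g : C -> C) : Rbar :=
  Lub_Rbar (fun r => exists z, inD z /\
     r = Cmod (harm_schwarzian h g z) * (1 - Cmod z ^ 2) ^ 2).

(* From h - g = k_a and g' = lam z h' we get h' = k_a' / (1 - lam z).  On the disk,
   (1 + z) / (1 - z) lies in the right half-plane, where the principal power
   W = ((1 + z) / (1 - z)) ^ a is holomorphic with W' / W = 2 a / (1 - z^2); so k_a' = W / (1 - z^2)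
   and the pre-Schwarzian P = h'' / h' = (2 a + 2 z) / (1 - z^2) + lam / (1 - lam z) is rational,
   with h''' = h' (P^2 + P').  The dilatation lam z has derivatives lam and 0, and
   substituting everything into S_f leaves a rational identity.  For the norm, S_f splits into six
   fractions, each bounded after multiplication by (1 - |z|^2)^2 through
   1 - |z|^2 <= |1 - z^2|, 1 - |z|^2 <= (1 + lam) |1 - lam z| and 1 - |z|^2 <= 1 - lam^2 |z|^2.
   Complex derivatives of exp and log are obtained from real partial derivatives by the
   Cauchy-Riemann equations. *)

From Stdlib Require Import Reals Lra Psatz ClassicalEpsilon.
From Coquelicot Require Import Coquelicot.
Open Scope R_scope.

Notation is_Cderive f z l := (is_derive (K := C_AbsRing) (V := C_NormedModule) f z l).

Definition has_partials (u : C -> R) (z : C) (ux uy : R) : Prop :=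
  filterdiff (K := R_AbsRing) (U := C_R_NormedModule) (V := R_NormedModule) u (locally z)
    (fun dz => fst dz * ux + snd dz * uy).

Lemma has_partials_eq u z ux uy ux' uy' :
  has_partials u z ux uy -> ux = ux' -> uy = uy' -> has_partials u z ux' uy'.
Proof. now intros H <- <-. Qed.

Lemma has_partials_fst z : has_partials fst z 1 0.
Proof.
  eapply filterdiff_ext_lin.
  - apply filterdiff_linear.
    apply (is_linear_fst (K := R_AbsRing) (U := R_NormedModule) (V := R_NormedModule)).
  - intros dz; simpl; ring.
Qed.

Lemma has_partials_snd z : has_partials snd z 0 1.
Proof.
  eapply filterdiff_ext_lin.
  - apply filterdiff_linear.
    apply (is_linear_snd (K := R_AbsRing) (U := R_NormedModule) (V := R_NormedModule)).
  - intros dz; simpl; ring.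
Qed.

Lemma has_partials_comp (phi : R -> R) u z ux uy d :
  has_partials u z ux uy -> is_derive phi (u z) d ->
  has_partials (fun w => phi (u w)) z (ux * d) (uy * d).
Proof.
  unfold has_partials in *; intros Hu Hphi.
  eapply filterdiff_ext_lin.
  - exact (filterdiff_comp' (U := C_R_NormedModule) (V := R_NormedModule)
             u phi z _ (fun y => scal y d) Hu Hphi).
  - intros dz; cbn; unfold mult; simpl; ring.
Qed.

Lemma has_partials_plus u v z ux uy vx vy :
  has_partials u z ux uy -> has_partials v z vx vy ->
  has_partials (fun w => u w + v w) z (ux + vx) (uy + vy).
Proof.
  unfold has_partials in *; intros Hu Hv.
  eapply filterdiff_ext_lin.
  - exact (filterdiff_plus_fct (U := C_R_NormedModule) (V := R_NormedModule) u v _ _ Hu Hv).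
  - intros dz; cbn; unfold plus; simpl; ring.
Qed.

Lemma has_partials_mult u v z ux uy vx vy :
  has_partials u z ux uy -> has_partials v z vx vy ->
  has_partials (fun w => u w * v w) z (ux * v z + u z * vx) (uy * v z + u z * vy).
Proof.
  unfold has_partials in *; intros Hu Hv.
  eapply filterdiff_ext_lin.
  - exact (filterdiff_mult_fct (K := R_AbsRing) (U := C_R_NormedModule)
             u v z _ _ Rmult_comm Hu Hv).
  - intros dz; cbn; unfold plus, mult; simpl; ring.
Qed.

Lemma has_partials_inv u z ux uy : has_partials u z ux uy -> u z <> 0 ->
  has_partials (fun w => / u w) z (- ux / u z ^ 2) (- uy / u z ^ 2).
Proof.
  intros Hu Hz. eapply has_partials_eq.
  - apply (has_partials_comp Rinv _ _ _ _ (- 1 / u z ^ 2) Hu).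
    exact (is_derive_inv (fun s => s) _ 1 (is_derive_id _) Hz).
  - simpl; field; exact Hz.
  - simpl; field; exact Hz.
Qed.

Lemma has_partials_opp u z ux uy : has_partials u z ux uy ->
  has_partials (fun w => - u w) z (- ux) (- uy).
Proof.
  intros Hu. eapply has_partials_eq.
  - apply (has_partials_comp Ropp _ _ _ _ (-1) Hu). auto_derive; [trivial | ring].
  - ring.
  - ring.
Qed.

Lemma has_partials_norm2 z :
  has_partials (fun w => fst w ^ 2 + snd w ^ 2) z (2 * fst z) (2 * snd z).
Proof.
  assert (Hsq : forall t, is_derive (fun s => s ^ 2) t (2 * t)).
  { intros t. auto_derive; [trivial | ring]. }
  eapply has_partials_eq.
  - apply has_partials_plus; apply (has_partials_comp (fun s => s ^ 2)).
    + apply has_partials_fst.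
    + apply Hsq.
    + apply has_partials_snd.
    + apply Hsq.
  - simpl; ring.
  - simpl; ring.
Qed.

Lemma norm_C_R (w : C) : @norm R_AbsRing C_R_NormedModule w = Cmod w.
Proof.
  destruct w as [x y].
  change (prod_norm (K := R_AbsRing) (U := R_NormedModule) (V := R_NormedModule) (x, y)
          = Cmod (x, y)).
  unfold prod_norm, Cmod. simpl fst; simpl snd.
  change (@norm _ R_NormedModule x) with (Rabs x).
  change (@norm _ R_NormedModule y) with (Rabs y).
  now rewrite !pow2_abs.
Qed.

Lemma locally_C_R_C (z : C) (P : C -> Prop) :
  @locally C_R_NormedModule z P -> @locally (AbsRing_UniformSpace C_AbsRing) z P.
Proof.
  intros [e He]. exists e. intros y Hy. apply He.
  change (Cmod (Cminus y z) < e) in Hy.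
  split.
  - change (Rabs (fst y - fst z) < e).
    eapply Rle_lt_trans; [|exact Hy]. eapply Rle_trans; [|apply Rmax_Cmod]. apply Rmax_l.
  - change (Rabs (snd y - snd z) < e).
    eapply Rle_lt_trans; [|exact Hy]. eapply Rle_trans; [|apply Rmax_Cmod]. apply Rmax_r.
Qed.

Lemma is_Cderive_of_filterdiff (f : C -> C) z l :
  filterdiff (K := R_AbsRing) (U := C_R_NormedModule) (V := C_R_NormedModule)
    f (locally z) (fun dz => Cmult dz l) ->
  is_Cderive f z l.
Proof.
  intros [_ Hd]. split; [apply is_linear_scal_l|].
  intros x Hx.
  apply (is_filter_lim_locally_unique (K := C_AbsRing) (V := AbsRing_NormedModule C_AbsRing)) in Hx.
  subst x. intros eps.
  eapply filter_imp; [|exact (locally_C_R_C _ _ (Hd z (fun P H => H) eps))].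
  intros y Hy; simpl in Hy. now rewrite !norm_C_R in Hy.
Qed.

Lemma is_Cderive_CR (u v : C -> R) z ux uy vx vy :
  has_partials u z ux uy -> has_partials v z vx vy -> uy = - vx -> vy = ux ->
  is_Cderive (fun w => (u w, v w)) z (ux, vx).
Proof.
  unfold has_partials; intros Hu Hv Euy Evy. apply is_Cderive_of_filterdiff.
  eapply filterdiff_ext_lin.
  - apply (filterdiff_comp'_2 (K := R_AbsRing) (T := C_R_NormedModule) (U := R_NormedModule)
             (V := R_NormedModule) (W := C_R_NormedModule) u v pair z _ _ pair Hu Hv).
    apply filterdiff_linear. split.
    + now intros [] [].
    + now intros k [].
    + exists 1. split; [lra|]. intros []. rewrite Rmult_1_l. apply Rle_refl.
  - intros [dx dy]. unfold Cmult; simpl. subst. f_equal; ring.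
Qed.

(* Coquelicot's generic rules for identity, products and composition are stated for this second,
   equivalent normed-module structure on [C]. *)
Notation is_Cderive_abs f z l :=
  (is_derive (K := C_AbsRing) (V := AbsRing_NormedModule C_AbsRing) f z l).

Lemma is_Cderive_abs_iff f z l : is_Cderive f z l <-> is_Cderive_abs f z l.
Proof.
  split; intros [_ Hd]; (split; [apply is_linear_scal_l|]);
    intros x Hx eps; exact (Hd x Hx eps).
Qed.

Lemma is_Cderive_eq f z (l l' : C) : is_Cderive f z l -> l = l' -> is_Cderive f z l'.
Proof. now intros H <-. Qed.

Lemma is_Cderive_const (c : C) z : is_Cderive (fun _ => c) z (RtoC 0).
Proof. exact (is_derive_const c z). Qed.

Lemma is_Cderive_id z : is_Cderive (fun w => w) z (RtoC 1).
Proof. exact (proj2 (is_Cderive_abs_iff _ _ _) (is_derive_id z)). Qed.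

Lemma is_Cderive_plus f g z df dg : is_Cderive f z df -> is_Cderive g z dg ->
  is_Cderive (fun w => Cplus (f w) (g w)) z (Cplus df dg).
Proof. exact (is_derive_plus f g z df dg). Qed.

Lemma is_Cderive_minus f g z df dg : is_Cderive f z df -> is_Cderive g z dg ->
  is_Cderive (fun w => Cminus (f w) (g w)) z (Cminus df dg).
Proof. exact (is_derive_minus f g z df dg). Qed.

Lemma is_Cderive_mult f g z df dg : is_Cderive f z df -> is_Cderive g z dg ->
  is_Cderive (fun w => Cmult (f w) (g w)) z (Cplus (Cmult df (g z)) (Cmult (f z) dg)).
Proof.
  intros Hf%is_Cderive_abs_iff Hg%is_Cderive_abs_iff. apply is_Cderive_abs_iff.
  exact (is_derive_mult f g z df dg Hf Hg Cmult_comm).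
Qed.

Lemma is_Cderive_comp f g z df dg : is_Cderive g z dg -> is_Cderive f (g z) df ->
  is_Cderive (fun w => f (g w)) z (Cmult dg df).
Proof. intros Hg Hf. apply (is_derive_comp f g z df dg Hf), is_Cderive_abs_iff, Hg. Qed.

(* The derivative rules leave beta-redexes, which [field] does not look through. *)
Ltac Cfield := cbv beta; field; cbv beta; repeat split; assumption.

Definition cexp (w : C) : C := (exp (fst w) * cos (snd w), exp (fst w) * sin (snd w)).

(* The principal logarithm on the right half-plane, where [Carg w = atan (Im w / Re w)]. *)
Definition clog_rhp (w : C) : C := (ln (Cmod w), atan (snd w / fst w)).

Lemma is_Cderive_cexp z : is_Cderive cexp z (cexp z).
Proof.
  apply is_Cderive_CR with (uy := - (exp (fst z) * sin (snd z))) (vy := exp (fst z) * cos (snd z)).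
  - eapply has_partials_eq.
    + apply has_partials_mult; apply has_partials_comp;
        [apply has_partials_fst | apply is_derive_exp |
         apply has_partials_snd | apply is_derive_cos].
    + simpl; ring.
    + simpl; ring.
  - eapply has_partials_eq.
    + apply has_partials_mult; apply has_partials_comp;
        [apply has_partials_fst | apply is_derive_exp |
         apply has_partials_snd | apply is_derive_sin].
    + simpl; ring.
    + simpl; ring.
  - reflexivity.
  - reflexivity.
Qed.

Lemma is_Cderive_clog_rhp z : 0 < fst z -> is_Cderive clog_rhp z (Cinv z).
Proof.
  destruct z as [x y]; simpl; intros Hx.
  assert (Hq : 0 < x ^ 2 + y ^ 2) by nra.
  apply is_Cderive_CR with (uy := y / (x ^ 2 + y ^ 2)) (vy := x / (x ^ 2 + y ^ 2)).
  - set (q := x ^ 2 + y ^ 2) in *.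
    assert (Hs : 0 < sqrt q) by (apply sqrt_lt_R0; exact Hq).
    assert (Hss : sqrt q * sqrt q = q) by (apply sqrt_sqrt; lra).
    eapply has_partials_eq.
    + apply (has_partials_comp (fun s => ln (sqrt s)) _ _ _ _ (1 / (2 * sqrt q) * / sqrt q)
               (has_partials_norm2 _)).
      apply (is_derive_comp ln sqrt); [apply is_derive_ln, Hs|].
      apply (is_derive_sqrt (fun s => s) q 1 (is_derive_id _) Hq).
    + cbn [fst snd]; fold q. rewrite <- Hss at 3. field. lra.
    + cbn [fst snd]; fold q. rewrite <- Hss at 3. field. lra.
  - eapply has_partials_eq.
    + apply has_partials_comp; [|apply is_derive_atan].
      apply has_partials_mult; [apply has_partials_snd|].
      apply has_partials_inv; [apply has_partials_fst|]. simpl; lra.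
    + simpl. unfold Rsqr. field. nra.
    + simpl. unfold Rsqr. field. nra.
  - simpl; field; lra.
  - reflexivity.
Qed.

Lemma is_Cderive_Cinv z : z <> RtoC 0 -> is_Cderive Cinv z (Copp (Cinv (Cmult z z))).
Proof.
  destruct z as [x y]; intros Hz.
  assert (Hq : 0 < x ^ 2 + y ^ 2).
  { destruct (Req_dec x 0), (Req_dec y 0); try nra. subst. now contradict Hz. }
  eapply is_Cderive_eq.
  - apply is_Cderive_CR with (uy := - (2 * x * y / (x ^ 2 + y ^ 2) ^ 2))
                             (vy := (y ^ 2 - x ^ 2) / (x ^ 2 + y ^ 2) ^ 2).
    + eapply has_partials_eq.
      * apply has_partials_mult; [apply has_partials_fst|].
        apply has_partials_inv; [apply has_partials_norm2|]. simpl; lra.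
      * reflexivity.
      * simpl. field. lra.
    + eapply has_partials_eq.
      * apply has_partials_mult;
          [apply has_partials_opp, has_partials_snd|].
        apply has_partials_inv; [apply has_partials_norm2|]. simpl; lra.
      * reflexivity.
      * simpl. field. lra.
    + simpl. field. lra.
    + simpl. field. lra.
  - unfold Cinv, Copp, Cmult; simpl. f_equal; field; nra.
Qed.

Lemma is_Cderive_inv f z df : is_Cderive f z df -> f z <> RtoC 0 ->
  is_Cderive (fun w => Cinv (f w)) z (Cmult df (Copp (Cinv (Cmult (f z) (f z))))).
Proof. intros Hf Hz. apply (is_Cderive_comp Cinv f z _ _ Hf), is_Cderive_Cinv, Hz. Qed.

Lemma Cder_eq f z l : is_Cderive f z l -> Cder f z = l.
Proof.
  intros H. unfold Cder.
  assert (Hex : exists l0, is_Cderive f z l0) by (exists l; exact H).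
  pose proof (epsilon_spec (inhabits (RtoC 0)) (fun l0 : C => is_Cderive f z l0) Hex) as Heps.
  now rewrite <- (is_C_derive_unique f z l H), <- (is_C_derive_unique f z _ Heps).
Qed.

Lemma Cder_correct f z :
  ex_derive (K := C_AbsRing) (V := C_NormedModule) f z -> is_Cderive f z (Cder f z).
Proof. intros [l H]. now rewrite (Cder_eq f z l H). Qed.

Lemma inD_norm2 z : inD z -> fst z ^ 2 + snd z ^ 2 < 1.
Proof.
  unfold inD, Cmod. intros H.
  destruct (Rlt_or_le (fst z ^ 2 + snd z ^ 2) 1) as [H1|H1]; [exact H1|].
  apply sqrt_le_1_alt in H1. rewrite sqrt_1 in H1. lra.
Qed.

Lemma locally_inD z : inD z -> @locally (AbsRing_UniformSpace C_AbsRing) z inD.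
Proof.
  unfold inD. intros Hz.
  assert (e : 0 < 1 - Cmod z) by lra.
  exists (mkposreal _ e). intros y Hy.
  change (Cmod (Cminus y z) < 1 - Cmod z) in Hy.
  replace y with (Cplus z (Cminus y z)) by ring.
  pose proof (Cmod_triangle z (Cminus y z)). simpl in Hy. lra.
Qed.

Lemma is_Cderive_inD_ext f g z l : inD z -> (forall w, inD w -> f w = g w) ->
  is_Cderive f z l -> is_Cderive g z l.
Proof.
  intros Hz E. apply is_derive_ext_loc.
  eapply filter_imp; [exact E | exact (locally_inD z Hz)].
Qed.

Lemma Cder_inD_ext f g z l : inD z -> (forall w, inD w -> f w = g w) ->
  is_Cderive g z l -> Cder f z = l.
Proof.
  intros Hz E Hg. apply Cder_eq, (is_Cderive_inD_ext g f z l Hz); [|exact Hg].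
  intros w Hw; symmetry; auto.
Qed.

Lemma inD_one_sub_neq0 z : inD z -> Cminus 1 z <> RtoC 0.
Proof.
  intros H E. apply inD_norm2 in H. destruct z as [x y]. injection E. simpl in *. intros. nra.
Qed.

Lemma inD_one_add_neq0 z : inD z -> Cplus 1 z <> RtoC 0.
Proof.
  intros H E. apply inD_norm2 in H. destruct z as [x y]. injection E. simpl in *. intros. nra.
Qed.

Lemma inD_one_sub_sq_neq0 z : inD z -> Cminus 1 (Cmult z z) <> RtoC 0.
Proof.
  intros H. replace (Cminus 1 (Cmult z z)) with (Cmult (Cminus 1 z) (Cplus 1 z)) by ring.
  apply Cmult_neq_0; [apply inD_one_sub_neq0 | apply inD_one_add_neq0]; exact H.
Qed.

Lemma inD_one_sub_scal_neq0 lam z : 0 <= lam < 1 -> inD z ->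
  Cminus 1 (Cmult (RtoC lam) z) <> RtoC 0.
Proof.
  intros Hl Hz E. apply inD_norm2 in Hz. destruct z as [x y]. injection E. simpl in *. intros. nra.
Qed.

Lemma inD_one_sub_scal_norm2_pos lam z : 0 <= lam < 1 -> inD z -> 0 < 1 - lam ^ 2 * Cmod z ^ 2.
Proof.
  unfold inD; intros Hl Hz. pose proof (Cmod_ge_0 z).
  assert (lam ^ 2 * Cmod z ^ 2 <= 1 * Cmod z ^ 2) by (apply Rmult_le_compat_r; nra).
  nra.
Qed.

Definition cayley (z : C) : C := Cdiv (Cplus 1 z) (Cminus 1 z).

Lemma cayley_re_pos z : inD z -> 0 < fst (cayley z).
Proof.
  intros H. apply inD_norm2 in H. destruct z as [x y]. simpl in H.
  unfold cayley, Cdiv, Cmult, Cinv, Cplus, Cminus, Copp; simpl.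
  set (d := (1 + - x) * ((1 + - x) * 1) + (0 + - y) * ((0 + - y) * 1)).
  assert (Hd : 0 < d) by (unfold d; nra).
  replace ((1 + x) * ((1 + - x) / d) - (0 + y) * (- (0 + - y) / d)) with ((1 - x * x - y * y) / d)
    by (field; lra).
  apply Rdiv_lt_0_compat; nra.
Qed.

Lemma is_Cderive_cayley z : inD z ->
  is_Cderive cayley z (Cdiv 2 (Cmult (Cminus 1 z) (Cminus 1 z))).
Proof.
  intros Hz. pose proof (inD_one_sub_neq0 z Hz).
  eapply is_Cderive_eq.
  - apply is_Cderive_mult.
    + apply is_Cderive_plus; [apply is_Cderive_const | apply is_Cderive_id].
    + apply is_Cderive_inv; [|assumption].
      apply is_Cderive_minus; [apply is_Cderive_const | apply is_Cderive_id].
  - Cfield.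
Qed.

(* [cayley_pow a z] is the principal power [((1 + z) / (1 - z)) ^ a]. *)
Definition cayley_pow (a : R) (z : C) : C := cexp (Cmult (RtoC a) (clog_rhp (cayley z))).

Lemma is_Cderive_cayley_pow a z : inD z ->
  is_Cderive (cayley_pow a) z
    (Cmult (cayley_pow a z) (Cdiv (RtoC (2 * a)) (Cminus 1 (Cmult z z)))).
Proof.
  intros Hz. pose proof (inD_one_sub_neq0 z Hz). pose proof (inD_one_add_neq0 z Hz).
  pose proof (inD_one_sub_sq_neq0 z Hz).
  eapply is_Cderive_eq.
  - apply (is_Cderive_comp cexp (fun w => Cmult (RtoC a) (clog_rhp (cayley w)))), is_Cderive_cexp.
    apply is_Cderive_mult; [apply is_Cderive_const|].
    apply (is_Cderive_comp clog_rhp cayley); [apply is_Cderive_cayley, Hz|].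
    apply is_Cderive_clog_rhp, cayley_re_pos, Hz.
  - fold (cayley_pow a z). unfold cayley. rewrite RtoC_mult. Cfield.
Qed.

Lemma cayley_pow_0 z : cayley_pow 0 z = RtoC 1.
Proof.
  unfold cayley_pow, cexp, Cmult, RtoC; simpl.
  rewrite !Rmult_0_l, Rminus_0_r, Rplus_0_r, exp_0, cos_0, sin_0. f_equal; ring.
Qed.

Lemma Carg_rhp w : 0 < fst w -> Carg w = atan (snd w / fst w).
Proof. intros H. unfold Carg. destruct (Rlt_dec 0 (fst w)); [reflexivity | contradiction]. Qed.

Lemma Clog_rhp w : 0 < fst w -> Clog w = clog_rhp w.
Proof. intros H. unfold Clog, clog_rhp. now rewrite Carg_rhp. Qed.

Lemma Cpow_real_rhp w a : 0 < fst w -> Cpow_real w a = cexp (Cmult (RtoC a) (clog_rhp w)).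
Proof.
  intros H. unfold Cpow_real.
  destruct (Req_EM_T (Cmod w) 0) as [E|E].
  - exfalso. pose proof (Rmax_Cmod w) as Hmax. rewrite E in Hmax.
    pose proof (Rmax_l (Rabs (fst w)) (Rabs (snd w))). pose proof (Rle_abs (fst w)). lra.
  - unfold cexp, clog_rhp, Cmult, RtoC, Rpower; simpl. rewrite <- (Carg_rhp w H).
    f_equal; f_equal; f_equal; ring.
Qed.

Lemma is_Cderive_k_fun a z : inD z ->
  is_Cderive (k_fun a) z (Cdiv (cayley_pow a z) (Cminus 1 (Cmult z z))).
Proof.
  intros Hz. pose proof (inD_one_sub_neq0 z Hz). pose proof (inD_one_add_neq0 z Hz).
  pose proof (inD_one_sub_sq_neq0 z Hz).
  unfold k_fun. destruct (Req_EM_T a 0) as [->|Ha].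
  - apply (is_Cderive_inD_ext (fun w => Cmult (RtoC (1 / 2)) (clog_rhp (cayley w))));
      [exact Hz | |].
    { intros w Hw. now rewrite Clog_rhp by apply cayley_re_pos, Hw. }
    eapply is_Cderive_eq.
    + apply is_Cderive_mult; [apply is_Cderive_const|].
      apply (is_Cderive_comp clog_rhp cayley); [apply is_Cderive_cayley, Hz|].
      apply is_Cderive_clog_rhp, cayley_re_pos, Hz.
    + rewrite cayley_pow_0. unfold cayley. rewrite (RtoC_div 1 2) by lra. Cfield.
  - apply (is_Cderive_inD_ext (fun w => Cmult (Cinv (RtoC (2 * a))) (Cminus (cayley_pow a w) 1)));
      [exact Hz | |].
    { intros w Hw. now rewrite Cpow_real_rhp by apply cayley_re_pos, Hw. }
    eapply is_Cderive_eq.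
    + apply is_Cderive_mult; [apply is_Cderive_const|].
      apply is_Cderive_minus; [apply is_Cderive_cayley_pow, Hz | apply is_Cderive_const].
    + rewrite RtoC_mult. assert (RtoC a <> RtoC 0) by (intros E; apply Ha; now injection E).
      Cfield.
Qed.

Lemma is_Cderive_logder_mult F P z dP :
  is_Cderive F z (Cmult (F z) (P z)) -> is_Cderive P z dP ->
  is_Cderive (fun w => Cmult (F w) (P w)) z (Cmult (F z) (Cplus (Cmult (P z) (P z)) dP)).
Proof.
  intros HF HP. eapply is_Cderive_eq; [apply is_Cderive_mult; eassumption|]. ring.
Qed.

Section ClosedForms.

Variables (a lam : R).

Definition dh_closed (z : C) : C :=
  Cdiv (cayley_pow a z) (Cmult (Cminus 1 (Cmult z z)) (Cminus 1 (Cmult (RtoC lam) z))).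

Definition pre_schwarzian (z : C) : C :=
  Cplus (Cdiv (Cplus (RtoC (2 * a)) (Cmult 2 z)) (Cminus 1 (Cmult z z)))
        (Cdiv (RtoC lam) (Cminus 1 (Cmult (RtoC lam) z))).

Definition pre_schwarzian_der (z : C) : C :=
  Cplus (Cdiv (Cplus (Cplus 2 (Cmult 2 (Cmult z z))) (Cmult (RtoC (4 * a)) z))
              (Cmult (Cminus 1 (Cmult z z)) (Cminus 1 (Cmult z z))))
        (Cdiv (Cmult (RtoC lam) (RtoC lam))
              (Cmult (Cminus 1 (Cmult (RtoC lam) z)) (Cminus 1 (Cmult (RtoC lam) z)))).

Hypothesis Hlam : 0 <= lam < 1.

Lemma is_Cderive_dh_closed z : inD z ->
  is_Cderive dh_closed z (Cmult (dh_closed z) (pre_schwarzian z)).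
Proof.
  intros Hz. pose proof (inD_one_sub_neq0 z Hz). pose proof (inD_one_add_neq0 z Hz).
  pose proof (inD_one_sub_sq_neq0 z Hz). pose proof (inD_one_sub_scal_neq0 lam z Hlam Hz).
  eapply is_Cderive_eq.
  - apply is_Cderive_mult; [apply is_Cderive_cayley_pow, Hz|].
    apply is_Cderive_inv; [|apply Cmult_neq_0; assumption].
    apply is_Cderive_mult; (apply is_Cderive_minus; [apply is_Cderive_const|]).
    + apply is_Cderive_mult; apply is_Cderive_id.
    + apply is_Cderive_mult; [apply is_Cderive_const | apply is_Cderive_id].
  - unfold dh_closed, pre_schwarzian. rewrite !RtoC_mult. Cfield.
Qed.

Lemma is_Cderive_pre_schwarzian z : inD z -> is_Cderive pre_schwarzian z (pre_schwarzian_der z).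
Proof.
  intros Hz. pose proof (inD_one_sub_neq0 z Hz). pose proof (inD_one_add_neq0 z Hz).
  pose proof (inD_one_sub_sq_neq0 z Hz). pose proof (inD_one_sub_scal_neq0 lam z Hlam Hz).
  eapply is_Cderive_eq.
  - apply is_Cderive_plus; apply is_Cderive_mult.
    + apply is_Cderive_plus; [apply is_Cderive_const|].
      apply is_Cderive_mult; [apply is_Cderive_const | apply is_Cderive_id].
    + apply is_Cderive_inv; [|assumption].
      apply is_Cderive_minus; [apply is_Cderive_const|].
      apply is_Cderive_mult; apply is_Cderive_id.
    + apply is_Cderive_const.
    + apply is_Cderive_inv; [|assumption].
      apply is_Cderive_minus; [apply is_Cderive_const|].
      apply is_Cderive_mult; [apply is_Cderive_const | apply is_Cderive_id].
  - unfold pre_schwarzian_der. rewrite !RtoC_mult. Cfield.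
Qed.

End ClosedForms.

Definition schwarzian_of (h1 h2 h3 w w1 w2 : C) : C :=
  let P := Cdiv h2 h1 in
  let den := Cminus 1 (RtoC (Cmod w ^ 2)) in
  Cminus (Cplus (Cminus (Cdiv h3 h1) (Cmult (RtoC (3/2)) (Cmult P P)))
                (Cmult (Cdiv (Cconj w) den) (Cminus (Cmult P w1) w2)))
         (Cmult (RtoC (3/2))
                (Cmult (Cdiv (Cmult w1 (Cconj w)) den) (Cdiv (Cmult w1 (Cconj w)) den))).

Lemma harm_schwarzian_of h g om z : om = (fun u => Cdiv (Cder g u) (Cder h u)) ->
  harm_schwarzian h g z =
  schwarzian_of (Cder h z) (Cder (Cder h) z) (Cder (Cder (Cder h)) z)
                (om z) (Cder om z) (Cder (Cder om) z).
Proof. intros ->. reflexivity. Qed.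

Lemma schwarzian_of_logder h1 P dP w w1 : h1 <> RtoC 0 ->
  schwarzian_of h1 (Cmult h1 P) (Cmult h1 (Cplus (Cmult P P) dP)) w w1 (RtoC 0) =
  let den := Cminus 1 (RtoC (Cmod w ^ 2)) in
  Cminus (Cplus (Cminus dP (Cmult (RtoC (1/2)) (Cmult P P)))
                (Cmult (Cdiv (Cconj w) den) (Cmult P w1)))
         (Cmult (RtoC (3/2))
                (Cmult (Cdiv (Cmult w1 (Cconj w)) den) (Cdiv (Cmult w1 (Cconj w)) den))).
Proof.
  intros H1. unfold schwarzian_of; cbv zeta.
  replace (Cdiv (Cmult h1 P) h1) with P by Cfield.
  replace (Cdiv (Cmult h1 (Cplus (Cmult P P) dP)) h1) with (Cplus (Cmult P P) dP) by Cfield.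
  replace (RtoC (3/2)) with (Cplus 1 (RtoC (1/2))) at 1 by (rewrite <- RtoC_plus; f_equal; lra).
  ring.
Qed.

Definition schwarzian_closed (a lam : R) (z : C) : C :=
  let L := RtoC lam in
  let A := RtoC a in
  let zb := Cconj z in
  let N2 := RtoC (1 - lam ^ 2 * Cmod z ^ 2) in
  let Q := Cminus 1 (Cmult z z) in
  let M := Cminus 1 (Cmult L z) in
  Cplus (Cplus (Cminus (Cplus
    (Cdiv (RtoC (2 * (1 - a ^ 2))) (Cmult Q Q))
    (Cdiv (Cmult L L) (Cmult 2 (Cmult M M))))
    (Cdiv (Cmult (Cmult 2 L) (Cplus z A)) (Cmult Q M)))
    (Cdiv (Cmult (Cmult (Cmult L L) zb)
             (Cplus (Cplus (Cplus (Cmult (Cmult (RtoC (-3)) L) (Cmult z z))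
                                  (Cmult (RtoC (2 * (1 - a * lam))) z))
                           (Cmult 2 A)) L))
          (Cmult (Cmult N2 Q) M)))
  (Copp (Cdiv (Cmult (RtoC (3 * lam ^ 4)) (Cmult zb zb)) (Cmult 2 (Cmult N2 N2)))).

Lemma Cconj_R x : Cconj (RtoC x) = RtoC x.
Proof. unfold Cconj, RtoC; simpl. f_equal; ring. Qed.

Lemma schwarzian_of_closed a lam z X : 0 <= lam < 1 -> inD z -> X <> RtoC 0 ->
  let P := pre_schwarzian a lam z in
  schwarzian_of X (Cmult X P) (Cmult X (Cplus (Cmult P P) (pre_schwarzian_der a lam z)))
    (Cmult (RtoC lam) z) (RtoC lam) (RtoC 0) = schwarzian_closed a lam z.
Proof.
  intros Hl Hz HX P. unfold P. rewrite schwarzian_of_logder by exact HX.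
  pose proof (inD_one_sub_neq0 z Hz). pose proof (inD_one_add_neq0 z Hz).
  pose proof (inD_one_sub_sq_neq0 z Hz). pose proof (inD_one_sub_scal_neq0 lam z Hl Hz).
  pose proof (inD_one_sub_scal_norm2_pos lam z Hl Hz) as Hn.
  set (n := 1 - lam ^ 2 * Cmod z ^ 2) in *.
  assert (HN : RtoC n <> RtoC 0) by (intros E; injection E; intros; lra).
  replace (Cminus 1 (RtoC (Cmod (Cmult (RtoC lam) z) ^ 2))) with (RtoC n)
    by (unfold n; rewrite Cmod_mult, Cmod_R, Rabs_pos_eq, <- RtoC_minus by lra; f_equal; ring).
  unfold schwarzian_closed, pre_schwarzian, pre_schwarzian_der; cbv zeta; fold n.
  replace (RtoC (-3)) with (Copp 3) by (unfold RtoC, Copp; simpl; f_equal; ring).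
  rewrite Cmult_conj, Cconj_R, !RtoC_mult, !RtoC_minus, RtoC_mult, !RtoC_pow, !RtoC_div by lra.
  Cfield.
Qed.

Section HarmonicMapping.

Variables (a lam : R) (h g : C -> C).
Hypothesis Hlam : 0 <= lam < 1.
Hypothesis Hh : forall z, inD z -> ex_derive (K := C_AbsRing) (V := C_NormedModule) h z.
Hypothesis Hg : forall z, inD z -> ex_derive (K := C_AbsRing) (V := C_NormedModule) g z.
Hypothesis Hk : forall z, inD z -> Cminus (h z) (g z) = k_fun a z.
Hypothesis Hdil : forall z, inD z -> Cder h z <> RtoC 0 /\
  Cdiv (Cder g z) (Cder h z) = Cmult (RtoC lam) z.

Lemma Cder_h z : inD z -> Cder h z = dh_closed a lam z.
Proof.
  intros Hz. destruct (Hdil z Hz) as [Hh1 Hom].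
  pose proof (inD_one_sub_sq_neq0 z Hz). pose proof (inD_one_sub_scal_neq0 lam z Hlam Hz).
  assert (Hg1 : Cder g z = Cmult (Cmult (RtoC lam) z) (Cder h z)) by (rewrite <- Hom; Cfield).
  assert (Hk1 : Cminus (Cder h z) (Cder g z) = Cdiv (cayley_pow a z) (Cminus 1 (Cmult z z))).
  { rewrite <- (Cder_eq _ _ _ (is_Cderive_k_fun a z Hz)). symmetry.
    apply Cder_eq, (is_Cderive_inD_ext (fun w => Cminus (h w) (g w))); [exact Hz | exact Hk |].
    apply is_Cderive_minus; apply Cder_correct; auto. }
  rewrite Hg1 in Hk1. unfold dh_closed.
  replace (Cder h z) with (Cdiv (Cminus (Cder h z) (Cmult (Cmult (RtoC lam) z) (Cder h z)))
                                (Cminus 1 (Cmult (RtoC lam) z))) by Cfield.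
  rewrite Hk1. Cfield.
Qed.

Lemma Cder2_h z : inD z -> Cder (Cder h) z = Cmult (dh_closed a lam z) (pre_schwarzian a lam z).
Proof.
  intros Hz. apply (Cder_inD_ext _ (dh_closed a lam)); [exact Hz | exact Cder_h |].
  apply is_Cderive_dh_closed; assumption.
Qed.

Lemma Cder3_h z : inD z ->
  Cder (Cder (Cder h)) z =
  Cmult (dh_closed a lam z)
        (Cplus (Cmult (pre_schwarzian a lam z) (pre_schwarzian a lam z))
               (pre_schwarzian_der a lam z)).
Proof.
  intros Hz. apply (Cder_inD_ext _ (fun w => Cmult (dh_closed a lam w) (pre_schwarzian a lam w)));
    [exact Hz | exact Cder2_h |].
  apply is_Cderive_logder_mult;
    [apply is_Cderive_dh_closed | apply is_Cderive_pre_schwarzian]; assumption.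
Qed.

Let om := fun u => Cdiv (Cder g u) (Cder h u).

Lemma Cder_om z : inD z -> Cder om z = RtoC lam.
Proof.
  intros Hz. apply (Cder_inD_ext _ (fun w => Cmult (RtoC lam) w)); [exact Hz | apply Hdil |].
  eapply is_Cderive_eq; [apply is_Cderive_mult; [apply is_Cderive_const | apply is_Cderive_id]|].
  cbv beta; ring.
Qed.

Lemma Cder2_om z : inD z -> Cder (Cder om) z = RtoC 0.
Proof.
  intros Hz. apply (Cder_inD_ext _ (fun _ => RtoC lam)); [exact Hz | exact Cder_om |].
  apply is_Cderive_const.
Qed.

Lemma harm_schwarzian_closed z : inD z -> harm_schwarzian h g z = schwarzian_closed a lam z.
Proof.
  intros Hz. rewrite (harm_schwarzian_of h g om z) by reflexivity.
  rewrite Cder2_om, Cder_om, Cder3_h, Cder2_h by exact Hz.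
  unfold om. rewrite (proj2 (Hdil z Hz)), Cder_h by exact Hz.
  apply schwarzian_of_closed; [exact Hlam | exact Hz |].
  rewrite <- Cder_h by exact Hz. exact (proj1 (Hdil z Hz)).
Qed.

End HarmonicMapping.

Lemma Cmod_frac_weight_le (c D1 D2 : C) (w al be : R) :
  0 < w -> w <= al * Cmod D1 -> w <= be * Cmod D2 ->
  Cmod (Cdiv c (Cmult D1 D2)) * w ^ 2 <= Cmod c * (al * be).
Proof.
  intros Hw H1 H2. pose proof (Cmod_ge_0 D1). pose proof (Cmod_ge_0 D2). pose proof (Cmod_ge_0 c).
  assert (P1 : 0 < Cmod D1) by (destruct (Req_dec (Cmod D1) 0) as [E|E]; [rewrite E in H1|]; lra).
  assert (P2 : 0 < Cmod D2) by (destruct (Req_dec (Cmod D2) 0) as [E|E]; [rewrite E in H2|]; lra).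
  assert (Hww : w ^ 2 <= (al * Cmod D1) * (be * Cmod D2))
    by (simpl; rewrite Rmult_1_r; apply Rmult_le_compat; lra).
  unfold Cdiv. rewrite Cmod_mult, Cmod_inv, Cmod_mult.
  - apply Rle_trans with (Cmod c * / (Cmod D1 * Cmod D2) * ((al * Cmod D1) * (be * Cmod D2))).
    + apply Rmult_le_compat_l; [|exact Hww].
      apply Rmult_le_pos; [lra | apply Rlt_le, Rinv_0_lt_compat; nra].
    + right. field. lra.
  - apply Cmult_neq_0; intros E; rewrite E, Cmod_0 in *; lra.
Qed.

Lemma inD_weight_one_sub_sq z : 1 - Cmod z ^ 2 <= 1 * Cmod (Cminus 1 (Cmult z z)).
Proof.
  pose proof (Cmod_triangle (Cminus 1 (Cmult z z)) (Cmult z z)) as T.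
  replace (Cplus (Cminus 1 (Cmult z z)) (Cmult z z)) with (RtoC 1) in T by ring.
  rewrite Cmod_1, Cmod_mult in T. simpl. lra.
Qed.

Lemma inD_weight_one_sub_scal lam z : 0 <= lam < 1 -> inD z ->
  1 - Cmod z ^ 2 <= (1 + lam) * Cmod (Cminus 1 (Cmult (RtoC lam) z)).
Proof.
  unfold inD; intros Hl Hz. pose proof (Cmod_ge_0 z).
  pose proof (Cmod_triangle (Cminus 1 (Cmult (RtoC lam) z)) (Cmult (RtoC lam) z)) as T.
  replace (Cplus (Cminus 1 (Cmult (RtoC lam) z)) (Cmult (RtoC lam) z)) with (RtoC 1) in T by ring.
  rewrite Cmod_1, Cmod_mult, Cmod_R, Rabs_pos_eq in T by lra.
  (* [(1 + lam) (1 - lam r) - (1 - r^2)] is a quadratic in [r] with discriminant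
     [lam (lam (1 + lam)^2 - 4) <= 0]. *)
  assert (0 <= lam * (4 - lam * (1 + lam) ^ 2)) by (apply Rmult_le_pos; nra).
  pose proof (pow2_ge_0 (Cmod z - lam * (1 + lam) / 2)).
  nra.
Qed.

Lemma inD_weight_norm2 lam z : 0 <= lam < 1 -> inD z ->
  1 - Cmod z ^ 2 <= 1 * Cmod (RtoC (1 - lam ^ 2 * Cmod z ^ 2)).
Proof.
  intros Hl Hz. pose proof (inD_one_sub_scal_norm2_pos lam z Hl Hz).
  rewrite Cmod_R, Rabs_pos_eq by lra.
  assert (0 <= (1 - lam ^ 2) * Cmod z ^ 2) by (apply Rmult_le_pos; nra).
  nra.
Qed.

Lemma schwarzian_closed_split a lam z : 0 <= lam < 1 -> inD z ->
  let Q := Cminus 1 (Cmult z z) in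
  let M := Cminus 1 (Cmult (RtoC lam) z) in
  let N := RtoC (1 - lam ^ 2 * Cmod z ^ 2) in
  schwarzian_closed a lam z =
  Cminus (Cplus (Cplus (Cminus (Cplus
    (Cdiv (RtoC (2 * (1 - a ^ 2))) (Cmult Q Q))
    (Cdiv (RtoC (lam ^ 2 / 2)) (Cmult M M)))
    (Cdiv (Cmult (RtoC (2 * lam)) (Cplus z (RtoC a))) (Cmult Q M)))
    (Cdiv (Cmult (RtoC (lam ^ 2)) (Cmult (Cconj z) (Cplus (Cmult 2 (RtoC a)) (Cmult 2 z))))
          (Cmult N Q)))
    (Cdiv (Cmult (RtoC (lam ^ 3)) (Cconj z)) (Cmult N M)))
    (Cdiv (Cmult (RtoC (3 * lam ^ 4 / 2)) (Cmult (Cconj z) (Cconj z))) (Cmult N N)).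
Proof.
  intros Hl Hz; cbv zeta.
  pose proof (inD_one_sub_sq_neq0 z Hz). pose proof (inD_one_sub_scal_neq0 lam z Hl Hz).
  pose proof (inD_one_sub_scal_norm2_pos lam z Hl Hz) as Hn.
  set (n := 1 - lam ^ 2 * Cmod z ^ 2) in *.
  assert (HN : RtoC n <> RtoC 0) by (intros E; injection E; intros; lra).
  unfold schwarzian_closed; cbv zeta; fold n.
  replace (RtoC (-3)) with (Copp 3) by (unfold RtoC, Copp; simpl; f_equal; ring).
  rewrite !RtoC_div, !RtoC_mult, !RtoC_minus, RtoC_mult, !RtoC_pow by lra.
  Cfield.
Qed.

Lemma Cmod_alt_sum6_le (T1 T2 T3 T4 T5 T6 : C) :
  Cmod (Cminus (Cplus (Cplus (Cminus (Cplus T1 T2) T3) T4) T5) T6) <=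
  Cmod T1 + Cmod T2 + Cmod T3 + Cmod T4 + Cmod T5 + Cmod T6.
Proof.
  unfold Cminus.
  pose proof (Cmod_triangle T1 T2).
  pose proof (Cmod_triangle (Cplus T1 T2) (Copp T3)).
  pose proof (Cmod_triangle (Cplus (Cplus T1 T2) (Copp T3)) T4).
  pose proof (Cmod_triangle (Cplus (Cplus (Cplus T1 T2) (Copp T3)) T4) T5).
  pose proof (Cmod_triangle (Cplus (Cplus (Cplus (Cplus T1 T2) (Copp T3)) T4) T5) (Copp T6)).
  rewrite !Cmod_opp in *. lra.
Qed.

Definition schwarzian_norm_bound (a lam : R) : R :=
  lam ^ 4 + 2 * lam ^ 3 * (Rabs a + 1) + lam ^ 2 * (4 * Rabs a + 13 / 2)
  + 2 * lam * (Rabs a + 2) + 2 * Rabs (1 - a ^ 2).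

Lemma schwarzian_closed_weighted_le a lam z : 0 <= lam < 1 -> inD z ->
  Cmod (schwarzian_closed a lam z) * (1 - Cmod z ^ 2) ^ 2 <=
  2 * Rabs (1 - a ^ 2) + lam ^ 2 / 2 * ((1 + lam) * (1 + lam)) + 2 * lam * (1 + Rabs a) * (1 + lam)
  + lam ^ 2 * (2 * Rabs a + 2) + lam ^ 3 * (1 + lam) + 3 * lam ^ 4 / 2.
Proof.
  intros Hl Hz. pose proof (Cmod_ge_0 z) as Hr. unfold inD in Hz.
  assert (Hw : 0 < 1 - Cmod z ^ 2) by nra.
  pose proof (inD_weight_one_sub_sq z) as WQ.
  pose proof (inD_weight_one_sub_scal lam z Hl Hz) as WM.
  pose proof (inD_weight_norm2 lam z Hl Hz) as WN.
  rewrite schwarzian_closed_split by assumption; cbv zeta.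
  eapply Rle_trans; [apply Rmult_le_compat_r; [apply pow2_ge_0 | apply Cmod_alt_sum6_le]|].
  rewrite !Rmult_plus_distr_r.
  repeat apply Rplus_le_compat;
    (eapply Rle_trans; [apply Cmod_frac_weight_le; eassumption|]);
    rewrite ?Cmod_mult, ?Cmod_conj, ?Cmod_R, ?(Rabs_pos_eq lam) by lra.
  - rewrite Rabs_mult, Rabs_pos_eq by lra. lra.
  - rewrite Rabs_pos_eq by nra. lra.
  - pose proof (Cmod_triangle z (RtoC a)) as T. rewrite Cmod_R in T.
    rewrite Rabs_pos_eq by lra. pose proof (Cmod_ge_0 (Cplus z (RtoC a))). nra.
  - pose proof (Cmod_triangle (Cmult 2 (RtoC a)) (Cmult 2 z)) as T.
    rewrite !Cmod_mult, !Cmod_R, Rabs_pos_eq in T by lra.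
    pose proof (Rabs_pos a). pose proof (Cmod_ge_0 (Cplus (Cmult 2 (RtoC a)) (Cmult 2 z))).
    rewrite Rabs_pos_eq by nra.
    assert (Cmod z * Cmod (Cplus (Cmult 2 (RtoC a)) (Cmult 2 z)) <= 2 * Rabs a + 2) by nra.
    assert (0 <= lam ^ 2) by nra. nra.
  - rewrite Rabs_pos_eq by (apply pow_le; lra).
    assert (0 <= lam ^ 3) by (apply pow_le; lra). nra.
  - rewrite Rabs_pos_eq by (assert (0 <= lam ^ 4) by (apply pow_le; lra); lra).
    assert (0 <= lam ^ 4) by (apply pow_le; lra). nra.
Qed.

Lemma schwarzian_weighted_sum_le a lam : 0 <= lam < 1 ->
  2 * Rabs (1 - a ^ 2) + lam ^ 2 / 2 * ((1 + lam) * (1 + lam)) + 2 * lam * (1 + Rabs a) * (1 + lam)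
  + lam ^ 2 * (2 * Rabs a + 2) + lam ^ 3 * (1 + lam) + 3 * lam ^ 4 / 2
  <= schwarzian_norm_bound a lam.
Proof.
  intros Hl. apply Rminus_le_0.
  replace (schwarzian_norm_bound a lam - _)
    with (2 * lam * (1 + lam * (1 - lam ^ 2)) + 2 * Rabs a * lam ^ 3)
    by (unfold schwarzian_norm_bound; field).
  pose proof (Rabs_pos a). assert (0 <= lam ^ 3) by (apply pow_le; lra).
  assert (0 <= lam * (1 - lam ^ 2)) by (apply Rmult_le_pos; nra).
  nra.
Qed.

Lemma schwarzian_norm_le h g a lam :
  (forall z, inD z -> harm_schwarzian h g z = schwarzian_closed a lam z) -> 0 <= lam < 1 ->
  Rbar_le (schwarzian_norm h g) (schwarzian_norm_bound a lam).
Proof.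
  intros HS Hl. unfold schwarzian_norm.
  match goal with |- Rbar_le (Lub_Rbar ?E) _ => destruct (Lub_Rbar_correct E) as [_ Hlub] end.
  apply Hlub. intros x [z [Hz ->]]. simpl. rewrite HS by exact Hz.
  eapply Rle_trans;
    [apply schwarzian_closed_weighted_le | apply schwarzian_weighted_sum_le]; assumption.
Qed.

Theorem theorem2p3 (a lam : R) (h g : C -> C)
  (Hlam : 0 <= lam < 1)
  (Hh : forall z, inD z -> ex_derive (K := C_AbsRing) (V := C_NormedModule) h z)
  (Hg : forall z, inD z -> ex_derive (K := C_AbsRing) (V := C_NormedModule) g z)
  (Hh0 : h (RtoC 0) = RtoC 0) (Hg0 : g (RtoC 0) = RtoC 0)
  (Hk : forall z, inD z -> Cminus (h z) (g z) = k_fun a z)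
  (Hdil : forall z, inD z -> Cder h z <> RtoC 0 /\
            Cdiv (Cder g z) (Cder h z) = Cmult (RtoC lam) z) :
  (forall z, inD z ->
     let L := RtoC lam in
     let A := RtoC a in
     let zb := Cconj z in
     let N2 := RtoC (1 - lam ^ 2 * Cmod z ^ 2) in
     let Q := Cminus 1 (Cmult z z) in
     let M := Cminus 1 (Cmult L z) in
     harm_schwarzian h g z =
       Cplus (Cplus (Cminus (Cplus
         (Cdiv (RtoC (2 * (1 - a ^ 2))) (Cmult Q Q))
         (Cdiv (Cmult L L) (Cmult 2 (Cmult M M))))
         (Cdiv (Cmult (Cmult 2 L) (Cplus z A)) (Cmult Q M)))
         (Cdiv (Cmult (Cmult (Cmult L L) zb)
                  (Cplus (Cplus (Cplus (Cmult (Cmult (RtoC (-3)) L) (Cmult z z))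
                                       (Cmult (RtoC (2 * (1 - a * lam))) z))
                                (Cmult 2 A)) L))
               (Cmult (Cmult N2 Q) M)))
       (Copp (Cdiv (Cmult (RtoC (3 * lam ^ 4)) (Cmult zb zb)) (Cmult 2 (Cmult N2 N2)))))
  /\
  Rbar_le (schwarzian_norm h g)
    (Finite (lam ^ 4 + 2 * lam ^ 3 * (Rabs a + 1) + lam ^ 2 * (4 * Rabs a + 13 / 2)
             + 2 * lam * (Rabs a + 2) + 2 * Rabs (1 - a ^ 2))).
Proof.
  pose proof (harm_schwarzian_closed a lam h g Hlam Hh Hg Hk Hdil) as HS.
  split.
  - exact HS.
  - exact (schwarzian_norm_le h g a lam HS Hlam).
Qed.
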